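(* The unique solution $h$ of the system \[ h(\emptyset,J)=\delta_{\emptyset,J},\qquad h(I,J)=e^{2b_{\iota(I)}}\sum_{K\subset J}\Bigl(\prod_{i\in K}|\zeta_{i,\iota(I)}|\Bigr)h(I'\cup K,J\setminus K)\quad\text{if }I\ne\emptyset \] (for disjoint $I,J\subset\{1,\dots,n\}$, $I'=I\setminus\{\iota(I)\}$) is \[ h(I,J)=\Bigl(\prod_{i\in I\cup J}e^{2b_i}\Bigr)\sum_{G\in\mathcal{F}_I(J)}\prod_{\{i,j\}\in G}|\zeta_{ij}|. \]
   Context: $n\ge1$, $b_1,\dots,b_n\ge0$ real, $\zeta_{ij}=\zeta_{ji}$ complex for $1\le i,j\le n$. $\iota$ is a function assigning to each nonempty $I\subset\{1,\dots,n\}$ an element $\iota(I)\in I$. For disjoint $I,J$, $\mathcal{F}_I(J)$ denotes the set of forests on vertex set $I\cup J$ rooted in $I$, i.e. forests each of whose trees contains exactly one element of $I$ (a forest may have isolated vertices; $\mathcal{F}_\emptyset(\emptyset)$ consists of the empty graph and $\mathcal{F}_\emptyset(J)=\emptyset$ for $J\ne\emptyset$). Empty sums are $0$, empty products are $1$. *)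

From HB Require Import structures.
From mathcomp Require Import all_boot.
From Stdlib Require Import Reals ClassicalDescription.
Set Implicit Arguments. Unset Strict Implicit. Unset Printing Implicit Defensive.

Notation "\rsum_ ( i | P ) F" := (\big[Rplus/0%R]_(i | P) F)
  (at level 41, F at level 41, i at level 50).
Notation "\rsum_ ( i 'in' A ) F" := (\big[Rplus/0%R]_(i in A) F)
  (at level 41, F at level 41, i, A at level 50).
Notation "\rprod_ ( i | P ) F" := (\big[Rmult/1%R]_(i | P) F)
  (at level 36, F at level 36, i at level 50).
Notation "\rprod_ ( i 'in' A ) F" := (\big[Rmult/1%R]_(i in A) F)
  (at level 36, F at level 36, i, A at level 50).

(* A complex number is represented as a pair (real part, imaginary part). *)
Definition Cplx := (R * R)%type.
Definition Cmod (z : Cplx) : R := sqrt (z.1 * z.1 + z.2 * z.2)%R.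

(* Simple graphs on the vertex set 'I_n: a set of 2-element edges. *)
Definition adj n (G : {set {set 'I_n}}) : rel 'I_n :=
  fun x y => [set x; y] \in G.

Definition acyclic n (G : {set {set 'I_n}}) : Prop :=
  forall c : seq 'I_n, uniq c -> (2 < size c)%N -> ~~ cycle (adj G) c.

(* G \in F_I(J): a forest on the vertex set I :|: J each of whose trees
   (connected components) contains exactly one element of I. *)
Definition rooted_forest n (I J : {set 'I_n}) (G : {set {set 'I_n}}) : Prop :=
  [/\ (forall e, e \in G -> #|e| = 2 /\ e \subset I :|: J),
      acyclic G &
      (forall v, v \in I :|: J -> exists! i, i \in I /\ connect (adj G) v i)].

Definition rooted_forestb n (I J : {set 'I_n}) (G : {set {set 'I_n}}) : bool :=
  if excluded_middle_informative (rooted_forest I J G) then true else false.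

Definition graph_weight n (zeta : 'I_n -> 'I_n -> Cplx) (G : {set {set 'I_n}}) : R :=
  \big[Rmult/1%R]_(p : 'I_n * 'I_n | ((p.1 < p.2)%N && ([set p.1; p.2] \in G))) Cmod (zeta p.1 p.2).

Definition h_formula n (b : 'I_n -> R) (zeta : 'I_n -> 'I_n -> Cplx)
  (I J : {set 'I_n}) : R :=
  ((\rprod_(i in I :|: J) exp (2 * b i))
   * \rsum_(G | rooted_forestb I J G) graph_weight zeta G)%R.

Definition solves_system n (b : 'I_n -> R) (zeta : 'I_n -> 'I_n -> Cplx)
  (iota : {set 'I_n} -> 'I_n) (h : {set 'I_n} -> {set 'I_n} -> R) : Prop :=
  (forall J : {set 'I_n}, h set0 J = if J == set0 then 1%R else 0%R) /\
  (forall I J : {set 'I_n}, I != set0 -> [disjoint I & J] ->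
     h I J = (exp (2 * b (iota I)) *
       \rsum_(K in powerset J)
          ((\rprod_(i in K) Cmod (zeta i (iota I)))
           * h ((I :\ iota I) :|: K) (J :\: K)))%R).

(* Write F_I(J) for the forests on I :|: J rooted in I and w(G) for the
   product of the |zeta_ij| over the edges of G.  The forest sum
   S(I,J) = \sum_(G in F_I(J)) w(G) satisfies the recursion of h: for a root
   r of I, a forest G of F_I(J) is the disjoint union of the star joining r
   to its neighbourhood K (a subset of J) and of a forest of
   F_(I :\ r :|: K)(J :\ K), and this correspondence is bijective for each K.
   Since the exponential prefactor of h(I,J) is e^{2 b_r} times the
   prefactor over (I :|: J) :\ r, the closed formula solves the system;
   uniqueness follows by induction on #|I :|: J|, which every recursive step
   lowers by one. *)

From HB Require Import structures.
From mathcomp Require Import all_boot.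
From Stdlib Require Import Reals ClassicalDescription.
Set Implicit Arguments. Unset Strict Implicit. Unset Printing Implicit Defensive.

Lemma RplusA : associative Rplus. Proof. by move=> *; ring. Qed.
Lemma RmultA : associative Rmult. Proof. by move=> *; ring. Qed.
HB.instance Definition _ :=
  Monoid.isComLaw.Build R 0%R Rplus RplusA Rplus_comm Rplus_0_l.
HB.instance Definition _ :=
  Monoid.isComLaw.Build R 1%R Rmult RmultA Rmult_comm Rmult_1_l.
HB.instance Definition _ := Monoid.isMulLaw.Build R 0%R Rmult Rmult_0_l Rmult_0_r.
HB.instance Definition _ :=
  Monoid.isAddLaw.Build R Rmult Rplus Rmult_plus_distr_r Rmult_plus_distr_l.

Section Graphs.
Variable n : nat.
Implicit Types (G : {set {set 'I_n}}) (A I J K V : {set 'I_n}) (r : 'I_n).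

(* Every vertex of [V] is connected in [G] to exactly one vertex of [A]; for
   [V = I :|: J] this is the root condition in the definition of F_I(J). *)
Definition unique_root A V G : Prop :=
  forall v, v \in V -> exists! i, i \in A /\ connect (adj G) v i.

Lemma adjC G x y : adj G x y = adj G y x.
Proof. by rewrite /adj setUC. Qed.

Lemma connectC G x y : connect (adj G) x y = connect (adj G) y x.
Proof. by apply: sym_connect_sym => u v; rewrite adjC. Qed.

Lemma unique_rootP A V G v i1 i2 : unique_root A V G -> v \in V ->
  i1 \in A -> i2 \in A -> connect (adj G) v i1 -> connect (adj G) v i2 -> i1 = i2.
Proof.
move=> ru vV i1A i2A c1 c2; case: (ru v vV) => x [_ uniq_x].
by rewrite -(uniq_x i1) ?(uniq_x i2).
Qed.

Lemma connect_invariant (T : Type) G (f : 'I_n -> T) :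
  (forall x y, adj G x y -> f x = f y) ->
  forall x y, connect (adj G) x y -> f x = f y.
Proof.
move=> f_adj x y /connectP [p pth ->]; elim: p x pth => //= z p IH x /andP [a pth].
by rewrite (f_adj _ _ a); apply: IH.
Qed.

Definition star r K : {set {set 'I_n}} := [set [set r; k] | k in K].
Definition nbr r G : {set 'I_n} := [set k | [set r; k] \in G].

Lemma star_root r K e : e \in star r K -> r \in e.
Proof. by case/imsetP => k _ ->; rewrite set21. Qed.

Lemma mem_star r K k : r \notin K -> ([set r; k] \in star r K) = (k \in K).
Proof.
move=> rK; apply/imsetP/idP => [[k' k'K ee] | kK]; last by exists k.
have : k' \in [set r; k] by rewrite ee set22.
rewrite in_set2 => /orP [/eqP k'r | /eqP <- //].
by rewrite k'r in k'K; rewrite k'K in rK.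
Qed.

Lemma detach_star G r : (forall e, e \in G -> #|e| = 2) ->
  [/\ forall e, e \in G :\: star r (nbr r G) -> r \notin e,
      r \notin nbr r G &
      (G :\: star r (nbr r G)) :|: star r (nbr r G) = G].
Proof.
move=> card2; split.
- move=> e /setDP [eG]; apply: contra => re.
  have /cards2P [x [y [_ exy]]] : #|e| == 2 by rewrite card2.
  move: re eG; rewrite exy in_set2 => /orP [] /eqP <- g; apply/imsetP.
  + by exists y; rewrite // inE.
  + by exists x; rewrite ?inE setUC.
- by rewrite inE; apply/negP => /card2; rewrite setUid cards1.
- apply/setP => e; rewrite in_setU in_setD.
  case: (boolP (e \in star r _)) => [/imsetP [k] | _]; last by rewrite orbF.
  by rewrite inE => g ->; rewrite g.
Qed.

(* Removing the root [r] of [I] together with its neighbours [K] (which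
   become new roots) leaves the vertex set of F_I(J) minus [r]. *)
Lemma detach_vertices I J K r : r \in I -> [disjoint I & J] -> K \subset J ->
  I :\ r :|: K :|: (J :\: K) = (I :|: J) :\ r.
Proof.
move=> rI dIJ KJ; apply/setP => x; rewrite !inE.
have [-> | xr] /= := eqVneq x r.
  rewrite (disjointFr dIJ rI) andbF orbF; apply/negbTE/negP.
  by move=> /(subsetP KJ); rewrite (disjointFr dIJ rI).
by case: (boolP (x \in K)) => [/(subsetP KJ) -> | _]; rewrite ?orbT ?orbF.
Qed.

Lemma root_notin_sub I J K r : r \in I -> [disjoint I & J] -> K \subset J ->
  r \notin K.
Proof. by move=> rI dIJ KJ; apply: contraL rI => /(subsetP KJ)/(disjointFl dIJ) ->. Qed.

Lemma detach_disjoint I J K r : [disjoint I & J] ->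
  [disjoint I :\ r :|: K & J :\: K].
Proof.
move=> dIJ; rewrite -setI_eq0; apply/eqP/setP => x; rewrite !inE.
case: (x \in K); rewrite ?andbF // orbF.
by case: (boolP (x \in J)) => [/(disjointFl dIJ) -> | _]; rewrite ?andbF.
Qed.

Section Attach.
Variables (G' : {set {set 'I_n}}) (r : 'I_n) (K : {set 'I_n}).
Hypotheses (G'r : forall e, e \in G' -> r \notin e) (rK : r \notin K).
Local Notation G := (G' :|: star r K).

Lemma adj_attach_root k : adj G r k = (k \in K).
Proof.
rewrite /adj in_setU mem_star // orb_idl // => /G'r.
by rewrite set21.
Qed.

Lemma adj_attach y z : adj G' y z = [&& adj G y z, y != r & z != r].
Proof.
rewrite /adj in_setU; case: (boolP ([set y; z] \in G')) => [g | g] /=.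
  by have := G'r g; rewrite in_set2 negb_or ![r == _]eq_sym.
apply/esym/negP => /and3P [/star_root]; rewrite in_set2.
by case/orP => /eqP <-; rewrite eqxx.
Qed.

Lemma nbr_attach : nbr r G = K.
Proof. by apply/setP => k; rewrite inE -adj_attach_root. Qed.

Lemma detach_attach : G :\: star r K = G'.
Proof.
apply/setP => e; rewrite in_setD in_setU.
case: (boolP (e \in star r K)) => eS /=; last by rewrite orbF.
by apply/esym/negP => /G'r; rewrite (star_root eS).
Qed.

Lemma adj_attach_sub y z : adj G' y z -> adj G y z.
Proof. by rewrite adj_attach => /and3P []. Qed.

Lemma connect_attach_sub y z : connect (adj G') y z -> connect (adj G) y z.
Proof. by apply: connect_sub => u v /adj_attach_sub /connect1. Qed.

Lemma connect_detached_root j : connect (adj G') r j -> j = r.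
Proof.
move=> /connectP [[|x p] /= pth ->] //; case/andP: pth.
by rewrite adj_attach eqxx andbF.
Qed.

Lemma adj_detach : {in ([pred y | y != r] : {pred 'I_n}) &, subrel (adj G) (adj G')}.
Proof. by move=> u v; rewrite !inE => ur vr a; rewrite adj_attach a ur vr. Qed.

Lemma path_detached_avoid x p : path (adj G') x p -> all [pred y | y != r] p.
Proof.
elim: p x => //= y p IH x /andP [a pth]; rewrite (IH y) ?andbT //.
by move: a; rewrite adj_attach => /and3P [].
Qed.

(* A walk of [G] from [v != r] either stays in [G'], or reaches [r], hence
   first reaches a neighbour of [r] inside [G']. *)
Lemma connect_attach v i : v != r -> connect (adj G) v i ->
  connect (adj G') v i \/ exists2 k, k \in K & connect (adj G') v k.
Proof.
move=> vr /connectP [p pth ->] {i}.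
elim: p v vr pth => [|y p IH] v vr /=; first by left; apply: connect0.
case/andP=> a pth; have [yr | yr] := eqVneq y r.
  by right; exists v; [move: a; rewrite yr adjC adj_attach_root | apply: connect0].
have a' : adj G' v y by rewrite adj_attach a vr yr.
case: (IH y yr pth) => [c | [k kK c]]; [left | right; exists k] => //;
  exact: connect_trans (connect1 a') c.
Qed.

(* In an acyclic [G], distinct neighbours of [r] lie in distinct components
   of [G']: otherwise a path between them closes a cycle through [r]. *)
Lemma nbr_separated_of_acyclic : acyclic G -> forall k1 k2, k1 \in K -> k2 \in K ->
  connect (adj G') k1 k2 -> k1 = k2.
Proof.
move=> ac k1 k2 k1K k2K /connectP [p pth E]; move: E k2K.
case: (shortenP pth) => p' pth' up' _ -> k2K.
apply/eqP; apply: contraT => ne.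
have k1r : k1 != r by apply: contraNneq rK => <-.
have p'r := path_detached_avoid pth'.
have p'0 : p' != [::] by apply: contraNneq ne => ->.
have := ac (r :: k1 :: p'); rewrite /=.
have -> : r \notin k1 :: p'.
  rewrite inE negb_or eq_sym k1r /=; apply/negP => rp.
  by move/allP: p'r => /(_ _ rp); rewrite inE eqxx.
move: up' => /= /andP [-> ->].
rewrite ltnS ltnS lt0n size_eq0 p'0 => /(_ isT isT); rewrite rcons_path.
by rewrite adj_attach_root k1K (sub_path adj_attach_sub pth') /= adjC adj_attach_root k2K.
Qed.

Lemma acyclic_attach : acyclic G' ->
  (forall k1 k2, k1 \in K -> k2 \in K -> connect (adj G') k1 k2 -> k1 = k2) ->
  acyclic G.
Proof.
move=> ac' Ksep c uc sc; apply/negP => cy; case: (boolP (r \in c)) => rc; last first.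
  have cr : all [pred y | y != r] c.
    by apply/allP => y yc; rewrite inE; apply: contraNneq rc => <-.
  by apply: (negP (ac' c uc sc)); exact: (sub_in_cycle adj_detach cr cy).
case: (rot_to rc) => i s E.
have : cycle (adj G) (r :: s) by rewrite -E rot_cycle.
have : uniq (r :: s) by rewrite -E rot_uniq.
have : 2 < size (r :: s) by rewrite -E size_rot.
case: s {E} => [|k1 p] //=; rewrite ltnS ltnS lt0n size_eq0 => p0.
move=> /andP [rnin up] /andP [a pth]; rewrite rcons_path in pth.
case/andP: pth => pth al.
have k1K : k1 \in K by rewrite -adj_attach_root.
have lK : last k1 p \in K by rewrite -adj_attach_root adjC.
have pth' : path (adj G') k1 p.
  have p_avoid : all [pred y | y != r] (k1 :: p).
    by apply/allP => y yin; rewrite inE; apply: contraNneq rnin => <-.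
  exact: (sub_in_path adj_detach p_avoid pth).
have E : k1 = last k1 p by apply: Ksep => //; apply/connectP; exists p.
case/andP: up => k1p _; case: p p0 {pth pth' al lK rnin} k1p E => // y q _ k1p E.
by move: k1p; rewrite E /= mem_last.
Qed.

Section Roots.
Variables I J : {set 'I_n}.
Hypotheses (rI : r \in I) (dIJ : [disjoint I & J]) (KJ : K \subset J).
Local Notation I' := (I :\ r :|: K).
Local Notation V' := ((I :|: J) :\ r).

Lemma nbr_not_root k : k \in K -> k \notin I.
Proof. by move=> /(subsetP KJ) kJ; rewrite (disjointFl dIJ kJ). Qed.

Lemma root_notin_new_roots : r \notin I'.
Proof. by rewrite !inE eqxx (negbTE rK). Qed.

Lemma new_roots_sub : I' \subset V'.
Proof. by rewrite -(detach_vertices rI dIJ KJ) subsetUl. Qed.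

(* The root in [I] of the [G]-component of [x]: the [G']-root of [x] if it
   lies in [I], and [r] if it is a neighbour of [r] (or if there is none). *)
Definition root_label x : 'I_n :=
  if [pick j in I' | connect (adj G') x j] is Some i
  then (if i \in K then r else i) else r.

Lemma root_label_root : root_label r = r.
Proof.
rewrite /root_label; case: pickP => [j /andP [jI' /connect_detached_root jr] | //].
by move: jI'; rewrite jr (negbTE root_notin_new_roots).
Qed.

Section RootLabel.
Hypothesis ru' : unique_root I' V' G'.

Lemma pick_root x i : x \in V' -> i \in I' -> connect (adj G') x i ->
  [pick j in I' | connect (adj G') x j] = Some i.
Proof.
move=> xV iI' ci; case: pickP => [j /andP [jI' cj] | none].
- by rewrite (unique_rootP ru' xV jI' iI' cj ci).
- by move: (none i); rewrite iI' ci.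
Qed.

Lemma root_label_nbr k : k \in K -> root_label k = r.
Proof.
move=> kK; have kI' : k \in I' by rewrite inE kK orbT.
by rewrite /root_label (pick_root (subsetP new_roots_sub _ kI') kI' (connect0 _ _)) kK.
Qed.

Lemma root_label_fixed i : i \in I -> root_label i = i.
Proof.
move=> iI; have [-> | ir] := eqVneq i r; first exact: root_label_root.
have iI' : i \in I' by rewrite !inE ir iI.
have iK : i \notin K by apply: contraL iI => /nbr_not_root.
by rewrite /root_label (pick_root (subsetP new_roots_sub _ iI') iI' (connect0 _ _)) (negbTE iK).
Qed.

Lemma root_label_adj y z : adj G y z -> root_label y = root_label z.
Proof.
have [-> | yr] := eqVneq y r; have [-> | zr] := eqVneq z r => // a.
- by rewrite root_label_root root_label_nbr // -adj_attach_root.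
- by rewrite root_label_root root_label_nbr // -adj_attach_root adjC.
have a' : adj G' y z by rewrite adj_attach a yr zr.
rewrite /root_label (@eq_pick _ _ [pred j in I' | connect (adj G') z j]) //.
move=> j /=; congr (_ && _); apply/idP/idP => c.
- by apply: connect_trans c; rewrite connectC; apply: connect1.
- exact: connect_trans (connect1 a') c.
Qed.

Lemma attach_roots_separated i1 i2 : i1 \in I -> i2 \in I ->
  connect (adj G) i1 i2 -> i1 = i2.
Proof.
move=> i1I i2I c12.
by rewrite -(root_label_fixed i1I) -(root_label_fixed i2I) (connect_invariant root_label_adj c12).
Qed.

Lemma unique_root_attach : unique_root I (I :|: J) G.
Proof.
move=> v vV.
have [w wI cw] : exists2 w, w \in I & connect (adj G) v w.
  have [-> | vr] := eqVneq v r; first by exists r => //; apply: connect0.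
  have vV' : v \in V' by rewrite in_setD1 vr.
  case: (ru' vV') => i [[iI' ci] _]; move: iI'; rewrite !inE => /orP [/andP [_ iI] | iK].
  + by exists i => //; apply: connect_attach_sub.
  + exists r => //; apply: connect_trans (connect_attach_sub ci) (connect1 _).
    by rewrite adjC adj_attach_root.
exists w; split => // i [iI ci]; apply: attach_roots_separated => //.
by apply: connect_trans ci; rewrite connectC.
Qed.

End RootLabel.

Lemma detach_roots_separated r1 r2 : acyclic G -> unique_root I (I :|: J) G ->
  r1 \in I' -> r2 \in I' -> connect (adj G') r1 r2 -> r1 = r2.
Proof.
move=> ac ru r1I' r2I' c12; have cG := connect_attach_sub c12.
have rooted x : x \in I -> connect (adj G) x r -> x = r.
  move=> xI cx; apply: (unique_rootP ru _ xI rI (connect0 _ _) cx).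
  by rewrite inE xI.
move: r1I' r2I'; rewrite !inE => /orP [/andP [r1r r1I] | r1K] /orP [/andP [r2r r2I] | r2K].
- by apply: (unique_rootP ru _ r1I r2I (connect0 _ _) cG); rewrite inE r1I.
- suff r1_r : r1 = r by rewrite r1_r eqxx in r1r.
  by apply: (rooted _ r1I (connect_trans cG (connect1 _))); rewrite adjC adj_attach_root.
- suff r2_r : r2 = r by rewrite r2_r eqxx in r2r.
  apply: (rooted _ r2I); rewrite connectC; apply: connect_trans (connect1 _) cG.
  by rewrite adj_attach_root.
- exact: (nbr_separated_of_acyclic ac r1K r2K c12).
Qed.

Lemma unique_root_detach : acyclic G -> unique_root I (I :|: J) G ->
  unique_root I' V' G'.
Proof.
move=> ac ru v; rewrite in_setD1 => /andP [vr vV].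
have [i [[iI ci] _]] := ru v vV.
have [w wI' cw] : exists2 w, w \in I' & connect (adj G') v w.
  case: (connect_attach vr ci) => [ci' | [k kK ck]]; last first.
    by exists k; rewrite // inE kK orbT.
  suff ir : i != r by exists i; rewrite // !inE ir iI.
  apply: contraNneq vr => ir; rewrite ir connectC in ci'.
  by apply/eqP/connect_detached_root.
exists w; split => // x [xI' cx]; apply: detach_roots_separated => //.
by apply: connect_trans cx; rewrite connectC.
Qed.

Lemma rooted_forest_attach :
  rooted_forest I J G <-> rooted_forest I' (J :\: K) G'.
Proof.
rewrite /rooted_forest (detach_vertices rI dIJ KJ).
split=> [[edges ac ru] | [edges' ac' ru']]; split.
- move=> e eG'; have [c2 sub] : #|e| = 2 /\ e \subset I :|: J.
    by apply: edges; rewrite inE eG'.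
  split=> //; apply/subsetP => x xe; rewrite in_setD1 (subsetP sub x xe) andbT.
  by apply: contraNneq (G'r eG') => <-.
- move=> c uc sc; apply: contra (ac c uc sc); apply: sub_cycle => y z.
  exact: adj_attach_sub.
- exact: unique_root_detach.
- move=> e; rewrite in_setU => /orP [/edges' [c2 sub] | /imsetP [k kK ->]].
    by split=> //; apply: subset_trans sub (subD1set _ _).
  have kr : k != r by apply: contraNneq rK => <-.
  split; first by rewrite cards2 eq_sym kr.
  by rewrite subUset !sub1set !inE rI (subsetP KJ k kK) orbT.
- apply: acyclic_attach => // k1 k2 k1K k2K.
  have k1I' : k1 \in I' by rewrite inE k1K orbT.
  have k2I' : k2 \in I' by rewrite inE k2K orbT.
  exact: (unique_rootP ru' (subsetP new_roots_sub _ k1I') k1I' k2I' (connect0 _ _)).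
- exact: unique_root_attach.
Qed.

End Roots.
End Attach.

(* In a forest of F_I(J) the neighbours of a root [r] lie in [J]: a root
   adjacent to [r] would be a second root of its component. *)
Lemma nbr_root_sub I J G r : r \in I -> rooted_forest I J G -> nbr r G \subset J.
Proof.
move=> rI [edges _ ru]; apply/subsetP => k; rewrite inE => g.
have [c2 sub] := edges _ g.
have kr : k != r by apply/eqP => kr; move: c2; rewrite kr setUid cards1.
have /setUP [kI | //] := subsetP sub k (set22 _ _).
have kr_eq : k = r.
  apply: (unique_rootP ru _ kI rI (connect0 _ _)); first by rewrite inE kI.
  by apply: connect1; rewrite /adj setUC.
by rewrite kr_eq eqxx in kr.
Qed.

Lemma detached_forest_avoids I J K r G' : r \in I -> [disjoint I & J] ->
  K \subset J -> rooted_forest (I :\ r :|: K) (J :\: K) G' ->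
  forall e, e \in G' -> r \notin e.
Proof.
move=> rI dIJ KJ [edges _ _] e /edges [_].
rewrite (detach_vertices rI dIJ KJ) => /subsetP sub; apply/negP => /sub.
by rewrite !inE eqxx.
Qed.

(* The bijection behind the recursion: forests of F_I(J) in which the root
   [r] has neighbourhood [K] correspond to forests of F_{I'}(J \ K). *)
Lemma rooted_forest_star I J K r G' : r \in I -> [disjoint I & J] ->
  K \subset J ->
  rooted_forest (I :\ r :|: K) (J :\: K) G' <->
  [/\ rooted_forest I J (G' :|: star r K), nbr r (G' :|: star r K) = K
    & (G' :|: star r K) :\: star r K = G'].
Proof.
move=> rI dIJ KJ.
have rK := root_notin_sub rI dIJ KJ.
split=> [fG' | [fG nb dd]].
  have avoid := detached_forest_avoids rI dIJ KJ fG'.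
  split; [exact/(rooted_forest_attach avoid rK rI dIJ KJ) | exact: nbr_attach |
    exact: detach_attach].
have avoid : forall e, e \in G' -> r \notin e.
  case: (fG) => edges _ _; have [avoid _ _] := detach_star r (fun e eG => (edges e eG).1).
  by rewrite nb dd in avoid.
exact/(rooted_forest_attach avoid rK rI dIJ KJ).
Qed.

End Graphs.

Section Weights.
Variables (n : nat) (zeta : 'I_n -> 'I_n -> Cplx).
Hypothesis zetaC : forall i j, zeta i j = zeta j i.

Lemma graph_weight_union (G1 G2 : {set {set 'I_n}}) : [disjoint G1 & G2] ->
  graph_weight zeta (G1 :|: G2) = (graph_weight zeta G1 * graph_weight zeta G2)%R.
Proof.
move=> d12; rewrite /graph_weight (bigID (fun p => [set p.1; p.2] \in G1)) /=.
congr (_ * _)%R; apply: eq_bigl => p; rewrite in_setU.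
  by case: ([set p.1; p.2] \in G1); rewrite ?orbT ?andbT ?andbF.
case: (boolP ([set p.1; p.2] \in G1)) => [/(disjointFr d12) -> | _]; rewrite ?andbF //.
by rewrite andbT.
Qed.

Lemma graph_weight_star (r : 'I_n) (K : {set 'I_n}) : r \notin K ->
  graph_weight zeta (star r K) = \rprod_(k in K) Cmod (zeta k r).
Proof.
move=> rK; rewrite /graph_weight.
pose edge (k : 'I_n) := if (k < r)%N then (k, r) else (r, k).
pose leaf (p : 'I_n * 'I_n) := if p.1 == r then p.2 else p.1.
rewrite (reindex_onto edge leaf); last first.
  move=> [a c] /= /andP [ac /imsetP [k kK ee]].
  have aS : a \in [set r; k] by rewrite -ee set21.
  have cS : c \in [set r; k] by rewrite -ee set22.
  have ne : a != c by apply: contraTneq ac => ->; rewrite ltnn.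
  rewrite /edge /leaf /=; have [ar | ar] := eqVneq a r.
    by rewrite -ar ltnNge (ltnW ac).
  move: aS cS; rewrite !in_set2 (negbTE ar) /= => /eqP ak /orP [/eqP cr | /eqP ck].
    by rewrite cr in ac *; rewrite ac.
  by rewrite ak ck eqxx in ne.
apply: eq_big => k; rewrite /edge /leaf; case: (ltngtP k r) => kr /=.
- have -> : (k == r) = false by apply: contraTF kr => /eqP ->; rewrite ltnn.
  by rewrite kr setUC mem_star // eqxx andbT.
- by rewrite kr mem_star // !eqxx andbT.
- by rewrite (val_inj kr) ltnn (negbTE rK).
- by [].
- by rewrite zetaC.
- by rewrite zetaC.
Qed.

End Weights.

Section ForestSums.
Variables (n : nat) (zeta : 'I_n -> 'I_n -> Cplx).
Hypothesis zetaC : forall i j, zeta i j = zeta j i.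
Implicit Types (G : {set {set 'I_n}}) (I J K : {set 'I_n}).

Definition forest_sum I J : R :=
  \rsum_(G | rooted_forestb I J G) graph_weight zeta G.

Lemma rooted_forestP I J G : reflect (rooted_forest I J G) (rooted_forestb I J G).
Proof. by rewrite /rooted_forestb; case: excluded_middle_informative; constructor. Qed.

Lemma forest_sum_no_root J : forest_sum set0 J = (if J == set0 then 1 else 0)%R.
Proof.
rewrite /forest_sum; case: eqP => [-> | /eqP /set0Pn [v vJ]]; last first.
  rewrite big_pred0 // => G; apply/rooted_forestP => [[_ _ ru]].
  by case: (ru v) => [|i [[]]]; rewrite ?inE ?vJ ?orbT.
rewrite (big_pred1 set0) => [|G].
  by rewrite /graph_weight big_pred0 // => p; rewrite in_set0 andbF.
apply/rooted_forestP/eqP => [[edges _ _] | ->].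
  apply/setP => e; rewrite in_set0; apply/negP => /edges [c2].
  by rewrite setU0 subset0 => /eqP e0; rewrite e0 cards0 in c2.
split=> [e | [|x [|y p]] // | v]; rewrite ?setU0 ?in_set0 //=.
by rewrite /adj in_set0.
Qed.

(* Splitting off the star of a root [r]: the forest sum satisfies the same
   recursion as h. *)
Lemma forest_sum_rec I J r : r \in I -> [disjoint I & J] ->
  forest_sum I J = \rsum_(K in powerset J)
    ((\rprod_(k in K) Cmod (zeta k r)) * forest_sum (I :\ r :|: K) (J :\: K))%R.
Proof.
move=> rI dIJ; rewrite /forest_sum (partition_big (nbr r) (mem (powerset J))) /=;
  last by move=> G /rooted_forestP fG; rewrite powersetE (nbr_root_sub rI fG).
apply: eq_bigr => K; rewrite powersetE => KJ; rewrite big_distrr /=.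
rewrite (reindex_onto (fun G' => G' :|: star r K) (fun G => G :\: star r K)).
  apply: eq_big => G'.
    apply/idP/rooted_forestP => [/andP [/andP [/rooted_forestP fG /eqP nb] /eqP dd] |].
      by apply/(rooted_forest_star G' rI dIJ KJ).
    by case/(rooted_forest_star G' rI dIJ KJ) => /rooted_forestP -> -> ->; rewrite !eqxx.
  move=> /andP [/andP [/rooted_forestP fG /eqP nb] /eqP dd].
  have fG' := (rooted_forest_star G' rI dIJ KJ).2 (And3 fG nb dd).
  have avoid := detached_forest_avoids rI dIJ KJ fG'.
  have rK := root_notin_sub rI dIJ KJ.
  rewrite graph_weight_union; last first.
    by apply/pred0P => e /=; apply/andP => [[/avoid re /star_root]]; apply/negP.
  by rewrite graph_weight_star // Rmult_comm.
move=> G /andP [/rooted_forestP [edges _ _] /eqP <-].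
by have [_ _ ->] := detach_star r (fun e eG => (edges e eG).1).
Qed.

End ForestSums.

Section System.
Variables (n : nat) (b : 'I_n -> R) (zeta : 'I_n -> 'I_n -> Cplx).
Variable iota : {set 'I_n} -> 'I_n.
Hypothesis iotaP : forall I : {set 'I_n}, I != set0 -> iota I \in I.

Lemma h_formulaE I J : h_formula b zeta I J =
  ((\rprod_(i in I :|: J) exp (2 * b i)) * forest_sum zeta I J)%R.
Proof. by []. Qed.

(* The closed formula satisfies the recursive system: the prefactor of
   h(I,J) is e^{2 b_r} times the prefactor over (I :|: J) :\ r, which is
   the common vertex set of all the terms h(I',J \ K). *)
Lemma h_formula_solves : (forall i j, zeta i j = zeta j i) ->
  solves_system b zeta iota (h_formula b zeta).
Proof.
move=> zetaC; split=> [J | I J I0 dIJ].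
  rewrite h_formulaE forest_sum_no_root.
  by case: eqP => [-> | _]; rewrite ?set0U ?big_set0; ring.
have rI := iotaP I0; set r := iota I in rI *.
have rIJ : r \in I :|: J by rewrite inE rI.
rewrite h_formulaE (forest_sum_rec zetaC rI dIJ) (big_setD1 _ rIJ) Rmult_assoc.
congr (_ * _)%R; rewrite big_distrr; apply: eq_bigr => K; rewrite powersetE => KJ.
rewrite h_formulaE (detach_vertices rI dIJ KJ); exact: Monoid.mulmCA.
Qed.

(* The system determines h on disjoint pairs, by induction on the number of
   vertices #|I :|: J|, which each recursive step decreases by one. *)
Lemma solves_system_unique h1 h2 :
  solves_system b zeta iota h1 -> solves_system b zeta iota h2 ->
  forall I J : {set 'I_n}, [disjoint I & J] -> h1 I J = h2 I J.
Proof.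
move=> [base1 rec1] [base2 rec2] I J.
have [m] := ubnP #|I :|: J|; elim: m I J => // m IH I J ltIJ dIJ.
have [-> | I0] := eqVneq I set0; first by rewrite base1 base2.
rewrite rec1 // rec2 //; congr (_ * _)%R; apply: eq_bigr => K.
rewrite powersetE => KJ; congr (_ * _)%R.
have rI := iotaP I0; apply: IH; last exact: detach_disjoint.
rewrite (detach_vertices rI dIJ KJ) -ltnS; apply: leq_trans ltIJ.
by rewrite ltnS [X in _ < X](cardsD1 (iota I)) inE rI.
Qed.

End System.

Theorem mainTheorem7 (n : nat) (b : 'I_n -> R) (zeta : 'I_n -> 'I_n -> Cplx)
  (iota : {set 'I_n} -> 'I_n)
  (hn : (0 < n)%N)
  (hb : forall i, (0 <= b i)%R)
  (hzeta : forall i j, zeta i j = zeta j i)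
  (hiota : forall I : {set 'I_n}, I != set0 -> iota I \in I) :
  solves_system b zeta iota (h_formula b zeta) /\
  (forall h, solves_system b zeta iota h ->
     forall I J : {set 'I_n}, [disjoint I & J] -> h I J = h_formula b zeta I J).
Proof.
have formula_solves := h_formula_solves b hiota hzeta.
split=> // h h_solves I J dIJ.
exact: (solves_system_unique hiota h_solves formula_solves dIJ).
Qed.
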